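(* Let $\mathcal O$ be the suboperad of $\mathrm{CNCB}$ generated by $p:=T_{bbu}$ and $r:=T_{ubu}$. Then $\mathcal O$ admits the presentation with generators $p,r$ of arity $2$ and relations $$r\circ_1 r=r\circ_2 r,\qquad r\circ_1 p=p\circ_2 r.$$ That is, $\mathcal O$ is isomorphic, via the morphism sending the generators to $p$ and $r$, to the quotient of the free operad on two binary generators by the operadic congruence generated by these relations.
   Context: For $n\ge2$, a bicoloured noncrossing configuration (BNC) of size $n$ is a regular polygon with vertices $1,\dots,n+1$ clockwise, together with disjoint sets of blue and red arcs among the arcs $(i,j)$, $1\le i<j\le n+1$. The arcs $(i,i+1)$ are the edges ($i$th edge), $(1,n+1)$ is the base, and the others are diagonals. Coloured arcs are pairwise noncrossing ($(i,j),(k,l)$ cross iff $i<k<j<l$ or $k<i<l<j$), and red arcs are diagonals. There is one BNC of size $1$, a blue segment, which is the unit. The operad $\mathrm{CNCB}$ has the BNCs as elements (arity = size). Its composition $\mathfrak C\circ_i\mathfrak D$ ($\mathfrak C$ of size $n$, $\mathfrak D$ of size $m$) glues the base of $\mathfrak D$ on the $i$th edge of $\mathfrak C$. Arcs $(a,b)$ of $\mathfrak C$ become $(\sigma(a),\sigma(b))$ with $\sigma(v)=v$ for $v\le i$ and $v+m-1$ otherwise, and arcs $(a,b)$ of $\mathfrak D$ become $(a+i-1,b+i-1)$, keeping colours. The exception is the arc $(i,i+m)$, which is red if the $i$th edge of $\mathfrak C$ and the base of $\mathfrak D$ are both uncoloured, blue if both are blue, and uncoloured otherwise. For $x,y,z\in\{b,u\}$,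 $T_{xyz}$ denotes the BNC of size $2$ (a triangle with vertices $1,2,3$) whose first edge $(1,2)$ has colour $x$, whose base $(1,3)$ has colour $y$, and whose second edge $(2,3)$ has colour $z$, where $b$ = blue and $u$ = uncoloured. The suboperad generated by a set is the smallest suboperad containing it. *)

From mathcomp Require Import all_boot.
Set Implicit Arguments. Unset Strict Implicit. Unset Printing Implicit Defensive.

Inductive color := U | Bl | Rd.   (* uncoloured, blue, red *)

Definition color_eqb (x y : color) : bool :=
  match x, y with U, U | Bl, Bl | Rd, Rd => true | _, _ => false end.

(* A configuration of size n: vertices 1..n+1, and a colour for each arc
   (a,b) with 1 <= a < b <= n+1.  Colours outside this range are irrelevant;
   all configurations built below are normalised to U outside the range, so
   that Leibniz equality of configurations is equality of BNCs. *)
Record config := Config { size_c : nat; col : nat -> nat -> color }.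

Definition is_arc (n a b : nat) : bool := (1 <= a) && (a < b) && (b <= n.+1).

Definition crossing (a b c d : nat) : bool :=
  ((a < c) && (c < b) && (b < d)) || ((c < a) && (a < d) && (d < b)).

Definition is_diag (n a b : nat) : bool :=
  is_arc n a b && (b != a.+1) && ~~ ((a == 1) && (b == n.+1)).

Definition is_bnc (c : config) : Prop :=
  let n := size_c c in
  1 <= n /\
  (forall a b, ~~ is_arc n a b -> col c a b = U) /\
  (n = 1 -> col c 1 2 = Bl) /\
  (forall a b, is_arc n a b -> col c a b = Rd -> is_diag n a b) /\
  (forall a b a' b', is_arc n a b -> is_arc n a' b' ->
     col c a b <> U -> col c a' b' <> U -> ~~ crossing a b a' b').

(* colour of the new arc (i,i+m) from colour x of the i-th edge of C and
   colour y of the base of D *)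
Definition glue_color (x y : color) : color :=
  match x, y with U, U => Rd | Bl, Bl => Bl | _, _ => U end.

(* Partial composition C o_i D (glue the base of D on the i-th edge of C). *)
Definition bcomp (C : config) (i : nat) (D : config) : config :=
  let n := size_c C in let m := size_c D in
  let inC v := (v <= i) || (i + m <= v) in
  let unsig v := if v <= i then v else v + 1 - m in
  Config (n + m - 1) (fun a b =>
    if ~~ is_arc (n + m - 1) a b then U
    else if (a == i) && (b == i + m) then glue_color (col C i i.+1) (col D 1 m.+1)
    else if (i <= a) && (b <= i + m) then col D (a + 1 - i) (b + 1 - i)
    else if inC a && inC b then col C (unsig a) (unsig b)
    else U).

Definition unit_c : config :=
  Config 1 (fun a b => if (a == 1) && (b == 2) then Bl else U).

(* T_xyz: first edge (1,2) colour x, base (1,3) colour y, second edge (2,3) colour z *)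
Definition T (x y z : color) : config :=
  Config 2 (fun a b =>
    if (a == 1) && (b == 2) then x
    else if (a == 1) && (b == 3) then y
    else if (a == 2) && (b == 3) then z else U).

Definition p_c : config := T Bl Bl U.
Definition r_c : config := T U Bl U.

Inductive in_O : config -> Prop :=
| inO_unit : in_O unit_c
| inO_p : in_O p_c
| inO_r : in_O r_c
| inO_comp C i D : in_O C -> in_O D -> 1 <= i <= size_c C -> in_O (bcomp C i D).

Inductive gen := Gp | Gr.

(* planar binary trees with internal nodes labelled by generators; Leaf is
   the unit; inputs are the leaves, numbered 1.. from left to right *)
Inductive tree := Leaf | Node of gen & tree & tree.

Fixpoint arity (t : tree) : nat :=
  match t with Leaf => 1 | Node _ l r => arity l + arity r end.

Fixpoint tcomp (t : tree) (i : nat) (s : tree) : tree :=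
  match t with
  | Leaf => if i == 1 then s else Leaf
  | Node g l r => if i <= arity l then Node g (tcomp l i s) r
                  else Node g l (tcomp r (i - arity l) s)
  end.

Definition gtree (g : gen) : tree := Node g Leaf Leaf.

Definition rel1_l := tcomp (gtree Gr) 1 (gtree Gr).
Definition rel1_r := tcomp (gtree Gr) 2 (gtree Gr).
Definition rel2_l := tcomp (gtree Gr) 1 (gtree Gp).
Definition rel2_r := tcomp (gtree Gp) 2 (gtree Gr).

Inductive cong : tree -> tree -> Prop :=
| cong_rel1 : cong rel1_l rel1_r
| cong_rel2 : cong rel2_l rel2_r
| cong_refl t : cong t t
| cong_sym t t' : cong t t' -> cong t' t
| cong_trans t t' t'' : cong t t' -> cong t' t'' -> cong t t''
| cong_compl t t' i s : cong t t' -> 1 <= i <= arity t ->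
    cong (tcomp t i s) (tcomp t' i s)
| cong_compr s i t t' : cong t t' -> 1 <= i <= arity s ->
    cong (tcomp s i t) (tcomp s i t').

Definition gen_c (g : gen) : config := match g with Gp => p_c | Gr => r_c end.

Fixpoint eval (t : tree) : config :=
  match t with
  | Leaf => unit_c
  | Node g l r => bcomp (bcomp (gen_c g) 2 (eval r)) 1 (eval l)
  end.

From mathcomp Require Import all_boot zify.
From Stdlib Require Import FunctionalExtensionality.

(* The configuration [eval t] has an explicit colouring [tcol t]: the base is
   blue, the arc cut off by the left subtree carries a colour determined by the
   root generator, the arc cut off by the right subtree is uncoloured, and all
   other arcs are coloured as in the subtrees.  This colouring commutes with
   grafting, so [eval] is an operad morphism: O is its image and both relations
   hold in CNCB.  Conversely, orienting the relations as
   r(r(x,y),z) -> r(x,r(y,z)) and r(p(x,y),z) -> p(x,r(y,z)) brings every tree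
   to a normal form in which every r has a leaf as left child, and a normal tree
   is recovered from its colouring: at the root, p leaves the blue arc (1, k+1),
   k the arity of the left subtree, whereas r leaves no coloured arc at vertex 1
   apart from the base. *)

(* [glue_color] of the generator's first edge with a blue base. *)
Definition gcol (g : gen) : color := match g with Gp => Bl | Gr => U end.

Fixpoint tcol (t : tree) : nat -> nat -> color :=
  match t with
  | Leaf => fun a b => if (a == 1) && (b == 2) then Bl else U
  | Node g l r => fun a b =>
     if ~~ is_arc (arity l + arity r) a b then U
     else if (a == 1) && (b == (arity l + arity r).+1) then Bl
     else if (a == 1) && (b == (arity l).+1) then gcol g
     else if (a == (arity l).+1) && (b == (arity l + arity r).+1) then U
     else if b <= (arity l).+1 then tcol l a b
     else if (arity l).+1 <= a then tcol r (a - arity l) (b - arity l)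
     else U
  end.

Ltac arc_lia := unfold is_arc in *; lia.

Ltac case_ifs :=
  unfold is_arc in *; rewrite ?if_neg ?if_and ?if_or ?if_neg;
  repeat match goal with
  | |- context [if ?c then _ else _] => case: (boolP c) => ?; try (exfalso; lia)
  end.

Lemma arity_gt0 t : 0 < arity t.
Proof. by elim: t => //= g l IHl r IHr; lia. Qed.

Lemma tcol_out t a b : ~~ is_arc (arity t) a b -> tcol t a b = U.
Proof.
case: t => [|g l r] /= arc; last by rewrite arc.
by case: ifP => // /andP[/eqP a1 /eqP b2]; move: arc; rewrite a1 b2.
Qed.

Lemma tcol_base t : tcol t 1 (arity t).+1 = Bl.
Proof.
case: t => [|g l r] //=.
have := arity_gt0 l; have := arity_gt0 r.
by rewrite /is_arc !eqxx; case: ifP => //; lia.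
Qed.

Lemma tcol_base_eq t a b : a = 1 -> b = (arity t).+1 -> tcol t a b = Bl.
Proof. by move=> -> ->; exact: tcol_base. Qed.

Ltac close_arc := first
  [ done | (exfalso; arc_lia)
  | (apply: tcol_out; arc_lia) | (symmetry; apply: tcol_out; arc_lia)
  | (apply: tcol_base_eq; arc_lia) | (symmetry; apply: tcol_base_eq; arc_lia)
  | (f_equal; arc_lia) | (do 2 f_equal; arc_lia) ].

Lemma arity_tcomp t i s : 1 <= i <= arity t ->
  arity (tcomp t i s) = arity t + arity s - 1.
Proof.
have := arity_gt0 s.
elim: t i => [|g l IHl r IHr] i /= s_gt0 i_range.
  have -> : i = 1 by lia.
  by rewrite /=; lia.
have := arity_gt0 l; case: ifP => i_l l_gt0 /=.
  by rewrite IHl //; lia.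
by rewrite IHr //; lia.
Qed.

Lemma tcol_tcomp t i s : 1 <= i <= arity t -> forall a b,
  tcol (tcomp t i s) a b =
  col (bcomp (Config (arity t) (tcol t)) i (Config (arity s) (tcol s))) a b.
Proof.
elim: t i => [|g l IHl r IHr] i i_range a b.
  have i1 : i = 1 by move: i_range => /= ?; lia.
  subst i => /=.
  by rewrite tcol_base; case_ifs; close_arc.
have s_gt0 := arity_gt0 s; have l_gt0 := arity_gt0 l; have r_gt0 := arity_gt0 r.
move: i_range => /= i_range.
case: ifP => i_l; rewrite /= arity_tcomp ?tcol_base; try lia.
(* Abstracting the arities keeps the case analysis within reach of [lia]. *)
- rewrite IHl /= ?tcol_base; last lia.
  move: (arity l) (arity r) (arity s) s_gt0 l_gt0 r_gt0 i_l i_range => k m ms *.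
  by case_ifs; first [by case: g | close_arc].
- rewrite IHr /= ?tcol_base; last lia.
  move: (arity l) (arity r) (arity s) s_gt0 l_gt0 r_gt0 i_l i_range => k m ms *.
  by case_ifs; first [by case: g | close_arc].
Qed.

Lemma config_ext c d :
  size_c c = size_c d -> (forall a b, col c a b = col d a b) -> c = d.
Proof.
case: c => n f; case: d => n' f' /= -> f_f'.
by congr Config; do 2 (apply: functional_extensionality => ?).
Qed.

Lemma bcomp_tcol t i s : 1 <= i <= arity t ->
  bcomp (Config (arity t) (tcol t)) i (Config (arity s) (tcol s)) =
  Config (arity (tcomp t i s)) (tcol (tcomp t i s)).
Proof.
move=> i_range; apply: config_ext => [|a b] /=; first by rewrite arity_tcomp.
by rewrite tcol_tcomp.
Qed.

Lemma gen_cE g : gen_c g = Config 2 (tcol (gtree g)).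
Proof. by apply: config_ext => [|a b]; case: g => //=; case_ifs; close_arc. Qed.

Lemma evalE t : eval t = Config (arity t) (tcol t).
Proof.
elim: t => [|g l IHl r IHr] //=.
by rewrite IHl IHr gen_cE (bcomp_tcol (gtree g)) //= (bcomp_tcol (Node g Leaf r)).
Qed.

Lemma size_eval t : size_c (eval t) = arity t.
Proof. by rewrite evalE. Qed.

Lemma eval_tcomp t i s : 1 <= i <= arity t ->
  eval (tcomp t i s) = bcomp (eval t) i (eval s).
Proof. by move=> i_range; rewrite !evalE bcomp_tcol. Qed.

Lemma in_O_eval c : in_O c <-> exists t : tree, eval t = c.
Proof.
split.
  elim => [|||C i D _ [t <-] _ [s <-] i_range].
  - by exists Leaf.
  - by exists (gtree Gp); rewrite evalE -gen_cE.
  - by exists (gtree Gr); rewrite evalE -gen_cE.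
  - by exists (tcomp t i s); rewrite eval_tcomp // -size_eval.
move=> [t <-]; elim: t => [|g l IHl r IHr] /=; first exact: inO_unit.
have [gen_size gen_in_O] : size_c (gen_c g) = 2 /\ in_O (gen_c g).
  by case: g; split=> //; constructor.
apply: inO_comp => //; first by apply: inO_comp => //; rewrite gen_size.
by rewrite /= size_eval gen_size; have := arity_gt0 r; lia.
Qed.

Lemma cong_eval {t t'} : cong t t' -> eval t = eval t'.
Proof.
elim => //.
1-2: by rewrite !evalE; apply: config_ext => // a b /=; case_ifs; close_arc.
- by move=> ? ? ? _ -> _ ->.
- move=> t1 t2 i s _ E i_range.
  have i_range' : 1 <= i <= arity t2 by rewrite -size_eval -E size_eval.
  by rewrite !eval_tcomp // E.
- by move=> s i t1 t2 _ E i_range; rewrite !eval_tcomp // E.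
Qed.

Lemma cong_nodel g s {t t'} : cong t t' -> cong (Node g t s) (Node g t' s).
Proof.
move=> t_t'; have := @cong_compr (Node g Leaf s) 1 _ _ t_t'.
by rewrite /=; apply; have := arity_gt0 s; lia.
Qed.

Lemma cong_noder g s {t t'} : cong t t' -> cong (Node g s t) (Node g s t').
Proof.
move=> t_t'; have := @cong_compr (Node g s Leaf) (arity s).+1 _ _ t_t'.
by rewrite /= ltnn subSnn /=; apply; lia.
Qed.

Lemma cong_node g {t t' s s'} :
  cong t t' -> cong s s' -> cong (Node g t s) (Node g t' s').
Proof.
by move=> t_t' s_s'; apply: cong_trans (cong_nodel g s t_t') (cong_noder g t' s_s').
Qed.

Lemma cong_subst3 {t t'} x y z : cong t t' -> arity t = 3 ->
  cong (tcomp (tcomp (tcomp t 3 z) 2 y) 1 x) (tcomp (tcomp (tcomp t' 3 z) 2 y) 1 x).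
Proof.
move=> t_t' t3; have y_gt0 := arity_gt0 y; have z_gt0 := arity_gt0 z.
have ar3 : arity (tcomp t 3 z) = (arity z).+2 by rewrite arity_tcomp t3 //; lia.
have ar2 : arity (tcomp (tcomp t 3 z) 2 y) = (arity y + arity z).+1.
  by rewrite arity_tcomp ar3 //; lia.
apply: cong_compl; last by rewrite ar2.
by apply: cong_compl; [apply: cong_compl; rewrite ?t3 | rewrite ar3].
Qed.

Lemma cong_rrA x y z : cong (Node Gr (Node Gr x y) z) (Node Gr x (Node Gr y z)).
Proof. exact: (cong_subst3 x y z cong_rel1 erefl). Qed.

Lemma cong_rpA x y z : cong (Node Gr (Node Gp x y) z) (Node Gp x (Node Gr y z)).
Proof. exact: (cong_subst3 x y z cong_rel2 erefl). Qed.

Fixpoint normal (t : tree) : bool :=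
  match t with
  | Leaf => true
  | Node Gp l r => normal l && normal r
  | Node Gr Leaf r => normal r
  | Node Gr _ _ => false
  end.

Fixpoint nf_r (A B : tree) : tree :=
  match A with
  | Leaf => Node Gr Leaf B
  | Node Gp A1 A2 => Node Gp A1 (nf_r A2 B)
  | Node Gr _ A2 => Node Gr Leaf (nf_r A2 B)
  end.

Fixpoint nf (t : tree) : tree :=
  match t with
  | Leaf => Leaf
  | Node Gp l r => Node Gp (nf l) (nf r)
  | Node Gr l r => nf_r (nf l) (nf r)
  end.

Lemma nf_rP {A B} : normal A -> normal B ->
  cong (Node Gr A B) (nf_r A B) /\ normal (nf_r A B).
Proof.
elim: A => [|[] A1 _ A2 IHA2] /=; first by move=> _ ->; split=> //; exact: cong_refl.
- move=> /andP[nA1 nA2] nB; have [A2B_cong nA2B] := IHA2 nA2 nB.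
  rewrite /= nA1; split=> //.
  exact: cong_trans (cong_rpA _ _ _) (cong_noder _ _ A2B_cong).
- case: A1 => // nA2 nB; have [A2B_cong nA2B] := IHA2 nA2 nB.
  by split=> //; apply: cong_trans (cong_rrA _ _ _) (cong_noder _ _ A2B_cong).
Qed.

Lemma nfP t : cong t (nf t) /\ normal (nf t).
Proof.
elim: t => [|[] l [l_nf nl] r [r_nf nr]] /=; first by split=> //; exact: cong_refl.
  by rewrite nl nr; split=> //; exact: cong_node.
have [lr_nf nlr] := nf_rP nl nr.
by split=> //; apply: cong_trans (cong_node Gr l_nf r_nf) lr_nf.
Qed.

Lemma tcol_nodeL g l r a b : is_arc (arity l) a b ->
  ~~ ((a == 1) && (b == (arity l).+1)) -> tcol (Node g l r) a b = tcol l a b.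
Proof. by have := arity_gt0 r; rewrite /= => *; case_ifs; close_arc. Qed.

Lemma tcol_nodeR g l r a b : is_arc (arity r) a b ->
  ~~ ((a == 1) && (b == (arity r).+1)) ->
  tcol (Node g l r) (a + arity l) (b + arity l) = tcol r a b.
Proof. by have := arity_gt0 l; rewrite /= => *; case_ifs; close_arc. Qed.

Lemma tcol_node_split g l r : tcol (Node g l r) 1 (arity l).+1 = gcol g.
Proof.
by have := arity_gt0 l; have := arity_gt0 r; rewrite /= => *; case_ifs; close_arc.
Qed.

Lemma tcol_node_vertex1 g l r j : (arity l).+1 < j <= arity l + arity r ->
  tcol (Node g l r) 1 j = U.
Proof. by have := arity_gt0 l; rewrite /= => *; case_ifs; close_arc. Qed.

Lemma tcol_r_vertex1 r j : 1 < j <= (arity r).+1 -> tcol (Node Gr Leaf r) 1 j = U.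
Proof.
move=> j_range; case: (j =P 2) => [-> | j2]; first exact: (tcol_node_split Gr Leaf r).
by apply: tcol_node_vertex1 => /=; lia.
Qed.

Lemma tcol_ext t t' : arity t = arity t' ->
  (forall a b, is_arc (arity t) a b -> ~~ ((a == 1) && (b == (arity t).+1)) ->
     tcol t a b = tcol t' a b) ->
  tcol t = tcol t'.
Proof.
move=> ar_eq t_t'; apply: functional_extensionality => a.
apply: functional_extensionality => b; case arc: (is_arc (arity t) a b); last first.
  by rewrite !tcol_out -?ar_eq ?arc.
case base: ((a == 1) && (b == (arity t).+1)); last by rewrite t_t' ?base.
by move/andP: base => [/eqP -> /eqP ->]; rewrite tcol_base ar_eq tcol_base.
Qed.

Lemma normal_node {g l r} :
  normal (Node g l r) -> [/\ normal l, normal r & g = Gr -> l = Leaf].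
Proof. by case: g => /=; [move=> /andP[] | case: l]. Qed.

Lemma p_r_tcol_neq {l r r'} : arity l + arity r = (arity r').+1 ->
  tcol (Node Gp l r) <> tcol (Node Gr Leaf r').
Proof.
move=> ar_eq eq_tcol; have := tcol_node_split Gp l r.
by rewrite eq_tcol tcol_r_vertex1 //; have := arity_gt0 l; have := arity_gt0 r; lia.
Qed.

Lemma normal_node_head {g l r g' l' r'} :
  normal (Node g l r) -> normal (Node g' l' r') ->
  arity l + arity r = arity l' + arity r' ->
  tcol (Node g l r) = tcol (Node g' l' r') -> g = g' /\ arity l = arity l'.
Proof.
move=> /normal_node[_ _ gl] /normal_node[_ _ gl'] ar_eq eq_tcol.
case: g gl eq_tcol => gl eq_tcol; case: g' gl' eq_tcol => gl' eq_tcol.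
- split=> //; apply/eqP; case: ltngtP => // ar_l.
    have := tcol_node_split Gp l' r'; rewrite -eq_tcol tcol_node_vertex1 //.
    by have := arity_gt0 r'; lia.
  have := tcol_node_split Gp l r; rewrite eq_tcol tcol_node_vertex1 //.
  by have := arity_gt0 r; lia.
- by rewrite gl' // in eq_tcol ar_eq; case: (p_r_tcol_neq ar_eq eq_tcol).
- by rewrite gl // in eq_tcol ar_eq; case: (p_r_tcol_neq (esym ar_eq) (esym eq_tcol)).
- by rewrite gl ?gl'.
Qed.

Lemma normal_tcol_inj t1 t2 : normal t1 -> normal t2 ->
  arity t1 = arity t2 -> tcol t1 = tcol t2 -> t1 = t2.
Proof.
elim: t1 t2 => [|g l IHl r IHr] [|g' l' r'] // n1 n2 ar_eq eq_tcol.
- by move: ar_eq => /=; have := arity_gt0 l'; have := arity_gt0 r'; lia.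
- by move: ar_eq => /=; have := arity_gt0 l; have := arity_gt0 r; lia.
have [<- ar_l] := normal_node_head n1 n2 ar_eq eq_tcol.
have ar_r : arity r = arity r' by move: ar_eq => /=; lia.
have [[nl nr _] [nl' nr' _]] := (normal_node n1, normal_node n2).
congr Node.
- apply: IHl => //; apply: tcol_ext => // a b arc base.
  by rewrite -(tcol_nodeL g l r) // eq_tcol tcol_nodeL -?ar_l.
- apply: IHr => //; apply: tcol_ext => // a b arc base.
  by rewrite -(tcol_nodeR g l r) // eq_tcol ar_l tcol_nodeR -?ar_r.
Qed.

Theorem theorem3p24 :
  (forall c : config, in_O c <-> exists t : tree, eval t = c) /\
  (forall t1 t2 : tree, arity t1 = arity t2 ->
     (eval t1 = eval t2 <-> cong t1 t2)).
Proof.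
split; first exact: in_O_eval.
move=> t1 t2 _; split; last exact: cong_eval.
move=> eval_eq.
have [t1_nf n1] := nfP t1; have [t2_nf n2] := nfP t2.
have : eval (nf t1) = eval (nf t2).
  by rewrite -(cong_eval t1_nf) -(cong_eval t2_nf).
rewrite !evalE => -[ar_nf tcol_nf].
have nf_eq : nf t1 = nf t2 by apply: normal_tcol_inj.
by apply: cong_trans t1_nf _; rewrite nf_eq; exact: cong_sym.
Qed.
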